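(* Let $m\ge 2$, $d_x,d_y\ge 1$, and let $\mathscr{G}=([m],\mathcal{E})$ be an undirected, connected, simple graph. Let $W\in\mathbb{R}^{m\times m}$ be symmetric and row stochastic with $W_{ij}>0$ if and only if $(i,j)\in\mathcal{E}$, $W_{ii}>0$ for all $i$, and with eigenvalues $-1<\lambda_m\le\dots\le\lambda_2<\lambda_1=1$. Let $U=\sqrt{I_m-W}$ denote the positive semidefinite square root of $I_m-W$. For each $i\in[m]$ let $f_i:\mathbb{R}^{d_x}\times\mathbb{R}^{d_y}\to\mathbb{R}$ be differentiable, with $f_i(\cdot,y)$ $\mu_x$-strongly convex for every $y$ and $f_i(x,\cdot)$ $\mu_y$-strongly concave for every $x$ (for some $\mu_x,\mu_y>0$), and let $g:\mathbb{R}^{d_x}\to\mathbb{R}$, $r:\mathbb{R}^{d_y}\to\mathbb{R}$ be proper, convex, possibly non-smooth functions. For $\mathbf{x}=(x^1,\dots,x^m)\in\mathbb{R}^{md_x}$, $\mathbf{y}=(y^1,\dots,y^m)\in\mathbb{R}^{md_y}$ put $F(\mathbf{x},\mathbf{y})=\sum_{i=1}^m f_i(x^i,y^i)$, $G(\mathbf{x})=\sum_{i=1}^m g(x^i)$, $R(\mathbf{y})=\sum_{i=1}^m r(y^i)$, and consider the consensus-constrained saddle point problem $$\min_{\mathbf{x}\in\mathbb{R}^{md_x}}\max_{\mathbf{y}\in\mathbb{R}^{md_y}} F(\mathbf{x},\mathbf{y})+G(\mathbf{x})-R(\mathbf{y})\quad\text{s.t.}\quad (U\otimes I_{d_x})\mathbf{x}=0,\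 (U\otimes I_{d_y})\mathbf{y}=0 \qquad (\mathrm{P})$$ and the Lagrangian $$\mathcal{L}(\mathbf{x},\mathbf{y};S^{\mathbf{x}},S^{\mathbf{y}})=F(\mathbf{x},\mathbf{y})+G(\mathbf{x})-R(\mathbf{y})+\langle S^{\mathbf{x}},(U\otimes I_{d_x})\mathbf{x}\rangle+\langle S^{\mathbf{y}},(U\otimes I_{d_y})\mathbf{y}\rangle,$$ with $S^{\mathbf{x}}\in\mathbb{R}^{md_x}$, $S^{\mathbf{y}}\in\mathbb{R}^{md_y}$, together with the unconstrained saddle point problem $$\min_{\mathbf{x}\in\mathbb{R}^{md_x},\,S^{\mathbf{y}}\in\mathbb{R}^{md_y}}\ \max_{\mathbf{y}\in\mathbb{R}^{md_y},\,S^{\mathbf{x}}\in\mathbb{R}^{md_x}}\ \mathcal{L}(\mathbf{x},\mathbf{y};S^{\mathbf{x}},S^{\mathbf{y}}). \qquad (\mathrm{L})$$ Then $(\mathbf{x}^\star,\mathbf{y}^\star)$ is a saddle point of $(\mathrm{P})$ if and only if there exist $\tilde S^{\mathbf{x}}\in\mathbb{R}^{md_x}$, $\tilde S^{\mathbf{y}}\in\mathbb{R}^{md_y}$ such that $(\mathbf{x}^\star,\mathbf{y}^\star,\tilde S^{\mathbf{x}},\tilde S^{\mathbf{y}})$ is a saddle point of $(\mathrm{L})$.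
   Context: A saddle point of $(\mathrm{P})$ is a pair $(\mathbf{x}^\star,\mathbf{y}^\star)$ of feasible points (satisfying the two consensus constraints) such that $\mathbf{x}^\star$ minimizes $F(\cdot,\mathbf{y}^\star)+G(\cdot)-R(\mathbf{y}^\star)$ over feasible $\mathbf{x}$ and $\mathbf{y}^\star$ maximizes $F(\mathbf{x}^\star,\cdot)+G(\mathbf{x}^\star)-R(\cdot)$ over feasible $\mathbf{y}$. A saddle point of $(\mathrm{L})$ is a point $(\mathbf{x}^\star,\mathbf{y}^\star,\tilde S^{\mathbf{x}},\tilde S^{\mathbf{y}})$ such that $(\mathbf{x}^\star,\tilde S^{\mathbf{y}})$ minimizes $\mathcal{L}(\cdot,\mathbf{y}^\star;\tilde S^{\mathbf{x}},\cdot)$ and $(\mathbf{y}^\star,\tilde S^{\mathbf{x}})$ maximizes $\mathcal{L}(\mathbf{x}^\star,\cdot;\cdot,\tilde S^{\mathbf{y}})$. $\otimes$ denotes the Kronecker product and $I_d$ the $d\times d$ identity. *)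

From HB Require Import structures.
From mathcomp Require Import all_boot all_order all_algebra.
From mathcomp Require Import all_classical all_reals all_analysis.
From mathcomp Require Export mxtens.
Set Implicit Arguments. Unset Strict Implicit. Unset Printing Implicit Defensive.
Import Order.TTheory GRing.Theory Num.Theory.
Import numFieldNormedType.Exports.
Local Open Scope ring_scope.

(* Stacked vectors x = (x^1,...,x^m) in R^{m d} are column vectors 'cV_(m*d),
   with the standard Kronecker ordering: entry k of block i is at index
   mxtens_index (i,k) = i*d + k. *)
Definition blk (R : Type) (m d : nat) (x : 'cV[R]_(m * d)) (i : 'I_m) : 'rV[R]_d :=
  \row_k x (mxtens_index (i, k)) 0.

Definition kronI (R : pzRingType) (m d : nat) (A : 'M[R]_m) : 'M[R]_(m * d) :=
  tensmx A (1%:M : 'M[R]_d).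

Definition dotc (R : pzRingType) (n : nat) (u v : 'cV[R]_n) : R :=
  \sum_(k < n) u k 0 * v k 0.
Definition sqnorm (R : pzRingType) (n : nat) (v : 'rV[R]_n) : R :=
  \sum_(k < n) v 0 k ^+ 2.

Definition convex_fun (R : realType) (n : nat) (g : 'rV[R]_n -> R) : Prop :=
  forall (a b : 'rV[R]_n) (t : R), 0 <= t <= 1 ->
    g (t *: a + (1 - t) *: b) <= t * g a + (1 - t) * g b.

Definition strongly_convex (R : realType) (n : nat) (mu : R) (g : 'rV[R]_n -> R) : Prop :=
  forall (a b : 'rV[R]_n) (t : R), 0 <= t <= 1 ->
    g (t *: a + (1 - t) *: b)
      <= t * g a + (1 - t) * g b - mu / 2 * t * (1 - t) * sqnorm (a - b).

Definition strongly_concave (R : realType) (n : nat) (mu : R) (g : 'rV[R]_n -> R) : Prop :=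
  strongly_convex mu (fun v => - g v).

Definition objP (R : realType) (m dx dy : nat)
  (f : 'I_m -> 'rV[R]_dx -> 'rV[R]_dy -> R) (g : 'rV[R]_dx -> R) (r : 'rV[R]_dy -> R)
  (x : 'cV[R]_(m * dx)) (y : 'cV[R]_(m * dy)) : R :=
  \sum_(i < m) f i (blk x i) (blk y i)
  + \sum_(i < m) g (blk x i) - \sum_(i < m) r (blk y i).

Definition lagr (R : realType) (m dx dy : nat) (U : 'M[R]_m)
  (f : 'I_m -> 'rV[R]_dx -> 'rV[R]_dy -> R) (g : 'rV[R]_dx -> R) (r : 'rV[R]_dy -> R)
  (x : 'cV[R]_(m * dx)) (y : 'cV[R]_(m * dy)) (Sx : 'cV[R]_(m * dx)) (Sy : 'cV[R]_(m * dy)) : R :=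
  objP f g r x y + dotc Sx (kronI dx U *m x) + dotc Sy (kronI dy U *m y).

Definition saddleP (R : realType) (m dx dy : nat) (U : 'M[R]_m)
  (f : 'I_m -> 'rV[R]_dx -> 'rV[R]_dy -> R) (g : 'rV[R]_dx -> R) (r : 'rV[R]_dy -> R)
  (xs : 'cV[R]_(m * dx)) (ys : 'cV[R]_(m * dy)) : Prop :=
  [/\ kronI dx U *m xs = 0, kronI dy U *m ys = 0,
      (forall x, kronI dx U *m x = 0 -> objP f g r xs ys <= objP f g r x ys) &
      (forall y, kronI dy U *m y = 0 -> objP f g r xs y <= objP f g r xs ys)].

Definition saddleL (R : realType) (m dx dy : nat) (U : 'M[R]_m)
  (f : 'I_m -> 'rV[R]_dx -> 'rV[R]_dy -> R) (g : 'rV[R]_dx -> R) (r : 'rV[R]_dy -> R)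
  (xs : 'cV[R]_(m * dx)) (ys : 'cV[R]_(m * dy))
  (Sxs : 'cV[R]_(m * dx)) (Sys : 'cV[R]_(m * dy)) : Prop :=
  (forall x Sy, lagr U f g r xs ys Sxs Sys <= lagr U f g r x ys Sxs Sy) /\
  (forall y Sx, lagr U f g r xs y Sx Sys <= lagr U f g r xs ys Sxs Sys).

From HB Require Import structures.
From mathcomp Require Import all_boot all_order all_algebra.
From mathcomp Require Import all_classical all_reals all_analysis.
From mathcomp Require Import lra.
Import Order.TTheory GRing.Theory Num.Theory.
Import numFieldNormedType.Exports.
Local Open Scope ring_scope.

(* If (xs, ys) is a saddle point of (P), feasibility forces every block of xs to equal one
   vector z: the kernel of U is spanned by the all-ones vector, because U^2 = I - W and the
   eigenvalue 1 of W is simple.  Then z minimizes sum_i f_i(., ys_i) + m g, so with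
   c_i = grad f_i(z, ys_i) and cbar their mean, -cbar is a subgradient of g at z and the
   multipliers s_i = cbar - c_i, which sum to zero, make every block optimal on its own.
   Families summing to zero are exactly the range of the symmetric matrix U (x) I, which turns
   the s_i into the multiplier Sxs; the same argument in y gives Sys.  Conversely, a saddle
   point of (L) is feasible because a linear function of S bounded on one side vanishes, and
   then the multiplier terms drop out of L. *)

Set Implicit Arguments.
Unset Strict Implicit.
Unset Printing Implicit Defensive.

Section DirectionalDerivative.
Variables (R : realType) (V : normedModType R).
Implicit Types (phi : V -> R) (p v : V) (c : R).

Lemma derive_ge_increment phi p v c : derivable phi p v ->
  (forall t, 0 < t <= 1 -> t * c <= phi (t *: v + p) - phi p) -> c <= 'D_v phi p.
Proof.
move=> /cvg_dnbhs_at_right dphi hinc; apply: (cvgr_to_ge dphi); near=> t.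
have t0 : 0 < t by near: t; exact: nbhs_right_gt.
have t1 : t <= 1 by near: t; exact/nbhs_right_le/ltr01.
rewrite /= ler_pdivlMl //.
by have := hinc t; rewrite t0 t1 => /(_ isT).
Unshelve. all: by end_near.
Qed.

Lemma derive_le_increment phi p v c : derivable phi p v ->
  (forall t, 0 < t <= 1 -> phi (t *: v + p) - phi p <= t * c) -> 'D_v phi p <= c.
Proof.
move=> /cvg_dnbhs_at_right dphi hinc; apply: (cvgr_to_le dphi); near=> t.
have t0 : 0 < t by near: t; exact: nbhs_right_gt.
have t1 : t <= 1 by near: t; exact/nbhs_right_le/ltr01.
rewrite /= ler_pdivrMl //.
by have := hinc t; rewrite t0 t1 => /(_ isT).
Unshelve. all: by end_near.
Qed.

End DirectionalDerivative.

Lemma differentiable_slicel (R : realType) (U V W : normedModType R)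
    (F : U * V -> W) (a : U) (b : V) :
  differentiable F (a, b) -> differentiable (fun u => F (u, b)) a.
Proof.
by move=> dF; apply: (@differentiable_comp _ _ _ _ (fun u => (u, b)) F).
Qed.

Lemma differentiable_slicer (R : realType) (U V W : normedModType R)
    (F : U * V -> W) (a : U) (b : V) :
  differentiable F (a, b) -> differentiable (fun v => F (a, v)) b.
Proof.
by move=> dF; apply: (@differentiable_comp _ _ _ _ (fun v => (a, v)) F).
Qed.

Section RowDot.
Variables (R : comPzRingType) (n : nat).
Implicit Types (a b c : 'rV[R]_n).

Definition dotr a b : R := \sum_(k < n) a 0 k * b 0 k.

Lemma dotrBl a b c : dotr (a - b) c = dotr a c - dotr b c.
Proof. by rewrite /dotr -sumrB; apply: eq_bigr => k _; rewrite !mxE mulrBl. Qed.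

Lemma dotrBr a b c : dotr a (b - c) = dotr a b - dotr a c.
Proof. by rewrite /dotr -sumrB; apply: eq_bigr => k _; rewrite !mxE mulrBr. Qed.

Lemma dotrZl x a b : dotr (x *: a) b = x * dotr a b.
Proof. by rewrite /dotr mulr_sumr; apply: eq_bigr => k _; rewrite !mxE mulrA. Qed.

Lemma dotr0l b : dotr 0 b = 0.
Proof. by rewrite /dotr big1 // => k _; rewrite mxE mul0r. Qed.

Lemma dotr_suml (I : Type) (r : seq I) (F : I -> 'rV[R]_n) b :
  dotr (\sum_(i <- r) F i) b = \sum_(i <- r) dotr (F i) b.
Proof.
by rewrite /dotr exchange_big; apply: eq_bigr => k _; rewrite summxE mulr_suml.
Qed.

End RowDot.

Section ConvexDifferentiable.
Variables (R : realType) (n : nat).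
Implicit Types (phi G : 'rV[R]_n -> R) (u z : 'rV[R]_n).

Definition grad phi z : 'rV[R]_n := \row_k 'd phi z 'e_k.

Lemma dotr_grad phi z v : dotr (grad phi z) v = 'd phi z v.
Proof.
rewrite [in RHS](row_sum_delta v) linear_sum; apply: eq_bigr => k _.
by rewrite linearZ mxE mulrC.
Qed.

Lemma convex_fun_segment G : convex_fun G ->
  forall u z t, 0 <= t -> t <= 1 -> G (t *: (u - z) + z) <= G z + t * (G u - G z).
Proof.
move=> hG u z t t0 t1; have := hG u z t; rewrite t0 t1 => /(_ isT).
have -> : t *: u + (1 - t) *: z = t *: (u - z) + z.
  by rewrite scalerBr scalerBl scale1r addrCA addrC.
lra.
Qed.

Lemma strongly_convex_convex (mu : R) G :
  0 <= mu -> strongly_convex mu G -> convex_fun G.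
Proof.
move=> mu0 hG a b t t01; have := hG a b t t01; case/andP: t01 => t0 t1.
have : 0 <= mu / 2 * t * (1 - t) * sqnorm (a - b).
  rewrite !mulr_ge0 ?divr_ge0 ?subr_ge0 //.
  by apply: sumr_ge0 => k _; exact: sqr_ge0.
lra.
Qed.

Lemma convex_grad_le phi z u : convex_fun phi -> differentiable phi z ->
  phi z + dotr (grad phi z) (u - z) <= phi u.
Proof.
move=> hphi dphi; rewrite dotr_grad -deriveE //.
suff : 'D_(u - z) phi z <= phi u - phi z by lra.
apply: derive_le_increment; first exact: diff_derivable.
move=> t /andP[t0 t1]; have := convex_fun_segment hphi u z (ltW t0) t1.
lra.
Qed.

Lemma convex_min_derive_ge (Psi G : 'rV[R]_n -> R) (c : R) z u :
  0 <= c -> derivable Psi z (u - z) -> convex_fun G ->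
  (forall w, Psi z + c * G z <= Psi w + c * G w) ->
  c * (G z - G u) <= 'D_(u - z) Psi z.
Proof.
move=> c0 dPsi hG hmin; apply: derive_ge_increment => // t /andP[t0 t1].
have := hmin (t *: (u - z) + z).
have := ler_wpM2l c0 (convex_fun_segment hG u z (ltW t0) t1).
nra.
Qed.

End ConvexDifferentiable.

Lemma separable_min_multipliers (R : realType) (m n : nat)
    (phi : 'I_m -> 'rV[R]_n -> R) (G : 'rV[R]_n -> R) (z : 'rV[R]_n) :
  (0 < m)%N -> convex_fun G -> (forall i, convex_fun (phi i)) ->
  (forall i, differentiable (phi i) z) ->
  (forall w, \sum_(i < m) (phi i z + G z) <= \sum_(i < m) (phi i w + G w)) ->
  exists2 s : 'I_m -> 'rV[R]_n, \sum_(i < m) s i = 0 &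
    forall u : 'I_m -> 'rV[R]_n, \sum_(i < m) (phi i z + G z)
      <= \sum_(i < m) (phi i (u i) + G (u i) + dotr (s i) (u i)).
Proof.
move=> m0 hG hphi dphi hmin.
have m0R : (0 : R) < m%:R by rewrite ltr0n.
pose c i := grad (phi i) z; pose cbar := m%:R^-1 *: \sum_(i < m) c i.
(* Optimality of [z] for [\sum_i phi i + m G] makes [- cbar] a subgradient of [G] at [z]. *)
have mean_ge w : G z - G w <= dotr cbar (w - z).
  rewrite dotrZl ler_pdivlMl // dotr_suml.
  under eq_bigr do rewrite /c dotr_grad -deriveE //.
  rewrite -derive_sum => [|i]; last exact: diff_derivable.
  apply: convex_min_derive_ge (ltW m0R) _ hG _ => [|w'].
    by apply: diff_derivable; exact: differentiable_sum.
  have := hmin w'; rewrite !big_split /= !sumr_const !card_ord !fct_sumE.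
  by rewrite !mulr_natl.
have sum_cbar : \sum_(i < m) cbar = \sum_(i < m) c i.
  by rewrite sumr_const card_ord -scaler_nat scalerA mulfV ?gt_eqF // scale1r.
exists (fun i => cbar - c i) => [|u]; first by rewrite sumrB sum_cbar subrr.
have -> : \sum_(i < m) (phi i z + G z) =
    \sum_(i < m) (phi i z + G z + dotr (cbar - c i) z).
  by rewrite [RHS]big_split /= -dotr_suml sumrB sum_cbar subrr dotr0l addr0.
apply: ler_sum => i _; have := mean_ge (u i).
have := convex_grad_le (u i) (hphi i) (dphi i).
rewrite !dotrBl !dotrBr; lra.
Qed.

Definition unblk (R : Type) (m d : nat) (b : 'I_m -> 'rV[R]_d) : 'cV[R]_(m * d) :=
  \col_p b (mxtens_unindex p).1 0 (mxtens_unindex p).2.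

Lemma blk_unblk (R : Type) (m d : nat) (b : 'I_m -> 'rV[R]_d) i : blk (unblk b) i = b i.
Proof. by apply/rowP => k; rewrite !mxE mxtens_indexK. Qed.

Lemma blk0 (R : nmodType) (m d : nat) (i : 'I_m) : blk (0 : 'cV[R]_(m * d)) i = 0.
Proof. by apply/rowP => k; rewrite !mxE. Qed.

Lemma eq_blk (R : Type) (m d : nat) (x y : 'cV[R]_(m * d)) :
  (forall i, blk x i = blk y i) -> x = y.
Proof.
move=> hxy; apply/colP => p; case: (mxtens_indexP p) => i k.
by have /rowP/(_ k) := hxy i; rewrite !mxE.
Qed.

Lemma big_mxtens_index (V : nmodType) (m d : nat) (F : 'I_(m * d) -> V) :
  \sum_(p < m * d) F p = \sum_(i < m) \sum_(k < d) F (mxtens_index (i, k)).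
Proof.
rewrite pair_big (reindex (@mxtens_index m d)) /=; first by apply: eq_bigr => -[].
by exists (@mxtens_unindex m d) => p _; rewrite (mxtens_indexK, mxtens_unindexK).
Qed.

Section StackedVectors.
Variables (R : comPzRingType) (m d : nat).
Implicit Types (x y : 'cV[R]_(m * d)) (A : 'M[R]_m).

Lemma dotc_blk x y : dotc x y = \sum_(i < m) dotr (blk x i) (blk y i).
Proof.
rewrite /dotc big_mxtens_index; apply: eq_bigr => i _.
by apply: eq_bigr => k _; rewrite !mxE.
Qed.

Lemma trmx_kronI A : (kronI d A)^T = kronI d A^T.
Proof. by rewrite /kronI trmx_tens trmx1. Qed.

Lemma blk_kronI A x i : blk (kronI d A *m x) i = row i (A *m \matrix_j blk x j).
Proof.
apply/rowP => k; rewrite !mxE big_mxtens_index; apply: eq_bigr => j _.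
rewrite (bigD1 k) //= big1 => [|l /negbTE lk]; rewrite /kronI tensmxE !mxE.
  by rewrite eqxx mulr1 addr0.
by rewrite eq_sym lk mulr0 mul0r.
Qed.

End StackedVectors.

Section ColumnDot.
Variables (R : comPzRingType) (n : nat).
Implicit Types (u v w : 'cV[R]_n).

Lemma dotcE u v : dotc u v = (u^T *m v) 0 0.
Proof. by rewrite mxE; apply: eq_bigr => k _; rewrite mxE. Qed.

Lemma dotc_mulmx u (A : 'M[R]_n) v : dotc u (A *m v) = dotc (A^T *m u) v.
Proof. by rewrite !dotcE trmx_mul trmxK mulmxA. Qed.

Lemma dotcDl u v w : dotc (u + v) w = dotc u w + dotc v w.
Proof. by rewrite /dotc -big_split; apply: eq_bigr => k _; rewrite !mxE mulrDl. Qed.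

Lemma dotcNl u v : dotc (- u) v = - dotc u v.
Proof. by rewrite /dotc -sumrN; apply: eq_bigr => k _; rewrite !mxE mulNr. Qed.

Lemma dotc0r u : dotc u 0 = 0.
Proof. by rewrite /dotc big1 // => k _; rewrite mxE mulr0. Qed.

End ColumnDot.

Section ColumnDotReal.
Variables (R : realDomainType) (n : nat).
Implicit Types (S w : 'cV[R]_n).

Lemma dotc_self_le0 w : dotc w w <= 0 -> w = 0.
Proof.
have sq_ge0 k : true -> 0 <= w k 0 * w k 0 by rewrite -expr2 sqr_ge0.
move=> w0; have ww0 : dotc w w = 0 by apply/eqP; rewrite eq_le w0 sumr_ge0.
apply/colP => k; have /eqP := psumr_eq0P sq_ge0 ww0 (i := k) isT.
by rewrite mulf_eq0 orbb mxE => /eqP.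
Qed.

Lemma dotc_max_eq0 S0 w : (forall S, dotc S w <= dotc S0 w) -> w = 0.
Proof. by move=> hmax; apply: dotc_self_le0; have := hmax (S0 + w); rewrite dotcDl; lra. Qed.

Lemma dotc_min_eq0 S0 w : (forall S, dotc S0 w <= dotc S w) -> w = 0.
Proof.
move=> hmin; apply: (@dotc_max_eq0 (- S0)) => S.
by have := hmin (- S); rewrite !dotcNl; lra.
Qed.

End ColumnDotReal.

Section SqrtLaplacianKernel.
Variables (R : realType) (m : nat) (W U : 'M[R]_m).
Hypotheses (hWsym : W^T = W) (hWstoch : forall i, \sum_(j < m) W i j = 1).
Hypotheses (hUsym : U^T = U) (hUsq : U *m U = 1%:M - W).
Hypothesis hWeig1 : \rank (eigenspace W 1) = 1%N.

Local Notation ones := (const_mx 1 : 'rV[R]_m).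

Lemma ones_mulW : ones *m W = ones.
Proof.
apply/rowP => j; rewrite !mxE -[RHS](hWstoch j); apply: eq_bigr => k _.
by rewrite mxE mul1r -[in LHS]hWsym mxE.
Qed.

Lemma kermx_sqrt_laplacian : (kermx U == ones)%MS.
Proof.
have ones_mulU : ones *m U = 0.
  apply: trmx_inj; rewrite trmx0; apply: dotc_self_le0; rewrite dotcE trmxK.
  by rewrite trmx_mul hUsym mulmxA -(mulmxA ones U U) hUsq mulmxBr mulmx1 ones_mulW
    subrr mul0mx mxE.
have ones_eig : (ones <= eigenspace W 1)%MS.
  by apply/eigenspaceP; rewrite scale1r ones_mulW.
have ones_neq0 : ones != 0.
  have m_gt0 : (0 < m)%N by have := rank_leq_col (eigenspace W 1); rewrite hWeig1.
  by apply/eqP => /rowP /(_ (Ordinal m_gt0)); rewrite !mxE; exact/eqP/oner_neq0.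
have eig_ones : (eigenspace W 1 <= ones)%MS.
  by have := (mxrank_leqif_sup ones_eig).2; rewrite rank_rV ones_neq0 hWeig1 eqxx => <-.
apply/andP; split; last by apply/sub_kermxP; exact: ones_mulU.
apply: submx_trans eig_ones; apply/sub_kermxP.
by rewrite -opprB -hUsq mulmxN mulmxA mulmx_ker mul0mx oppr0.
Qed.

End SqrtLaplacianKernel.

Section ConsensusConstraint.
Variables (R : realType) (m : nat) (U : 'M[R]_m).
Local Notation ones := (const_mx 1 : 'rV[R]_m).
Hypotheses (hUsym : U^T = U) (hkerU : (kermx U == ones)%MS).

Lemma ones_mulU : ones *m U = 0.
Proof. by apply/sub_kermxP; rewrite (eqmxP hkerU). Qed.

Lemma kronI_ker_consensus d (x : 'cV[R]_(m * d)) :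
  kronI d U *m x = 0 -> forall i j, blk x i = blk x j.
Proof.
move=> Ux0 i j; set X := \matrix_l blk x l.
have UX0 : U *m X = 0.
  by apply/row_matrixP => l; rewrite -blk_kronI Ux0 row0 blk0.
have : (X^T <= ones)%MS.
  by rewrite -(eqmxP hkerU); apply/sub_kermxP; rewrite -hUsym -trmx_mul UX0 trmx0.
case/submxP => D /(congr1 trmx); rewrite trmxK trmx_mul trmx_const => XD.
by rewrite -(rowK (fun l => blk x l) i) -(rowK (fun l => blk x l) j) -/X XD !row_mul !row_const.
Qed.

Lemma kronI_unblk_const d (u : 'rV[R]_d) : kronI d U *m unblk (fun=> u) = 0.
Proof.
apply: eq_blk => i; rewrite blk_kronI.
have -> : \matrix_(j < m) blk (unblk (fun=> u)) j = (const_mx 1 : 'cV[R]_m) *m u.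
  apply/row_matrixP => j; rewrite rowK blk_unblk row_mul row_const.
  by apply/rowP => k; rewrite !mxE big_ord1 !mxE mul1r.
have U1 : U *m (const_mx 1 : 'cV[R]_m) = 0.
  by apply: trmx_inj; rewrite trmx_mul trmx_const hUsym ones_mulU trmx0.
by rewrite mulmxA U1 mul0mx row0 blk0.
Qed.

Lemma rowsum_eq0_mulU d (M : 'M[R]_(m, d)) : ones *m M = 0 -> exists A, M = U *m A.
Proof.
move=> onesM.
have U_ker : (U <= kermx ones^T)%MS.
  by apply/sub_kermxP; rewrite -[U]hUsym -trmx_mul ones_mulU trmx0.
have rank_U : \rank (kermx ones^T) = \rank U.
  rewrite mxrank_ker mxrank_tr -(eqmxP hkerU) mxrank_ker subKn //.
  exact: rank_leq_row.
have : (M^T <= U)%MS.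
  apply: submx_trans (_ : kermx ones^T <= U)%MS.
    by apply/sub_kermxP; rewrite -trmx_mul onesM trmx0.
  by have := (mxrank_leqif_sup U_ker).2; rewrite rank_U eqxx => <-.
by case/submxP => A /(congr1 trmx); rewrite trmxK trmx_mul hUsym; exists A^T.
Qed.

Lemma sum_eq0_dotc_kronI d (s : 'I_m -> 'rV[R]_d) : \sum_(i < m) s i = 0 ->
  exists S : 'cV[R]_(m * d), forall x,
    dotc S (kronI d U *m x) = \sum_(i < m) dotr (s i) (blk x i).
Proof.
move=> s0; have [A sA] : exists A, \matrix_i s i = U *m A.
  apply: rowsum_eq0_mulU; rewrite mulmx_sum_row -[RHS]s0.
  by apply: eq_bigr => i _; rewrite mxE scale1r rowK.
pose S := unblk (fun i => row i A).
have SA : \matrix_j blk S j = A by apply/row_matrixP => j; rewrite rowK blk_unblk.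
exists S => x; rewrite dotc_mulmx trmx_kronI hUsym dotc_blk.
by apply: eq_bigr => i _; rewrite blk_kronI SA -sA rowK.
Qed.

Lemma consensus_multiplier d (phi : 'I_m -> 'rV[R]_d -> R) (G : 'rV[R]_d -> R)
    (xs : 'cV[R]_(m * d)) :
  (0 < m)%N -> kronI d U *m xs = 0 ->
  convex_fun G -> (forall i, convex_fun (phi i)) ->
  (forall i, differentiable (phi i) (blk xs i)) ->
  (forall x, kronI d U *m x = 0 ->
     \sum_(i < m) (phi i (blk xs i) + G (blk xs i))
       <= \sum_(i < m) (phi i (blk x i) + G (blk x i))) ->
  exists S : 'cV[R]_(m * d), forall x,
    \sum_(i < m) (phi i (blk xs i) + G (blk xs i))
      <= \sum_(i < m) (phi i (blk x i) + G (blk x i)) + dotc S (kronI d U *m x).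
Proof.
move=> m0 Uxs0 hG hphi dphi hmin.
pose z := blk xs (Ordinal m0).
have xsE i : blk xs i = z by exact: kronI_ker_consensus.
have sumE : \sum_(i < m) (phi i (blk xs i) + G (blk xs i)) = \sum_(i < m) (phi i z + G z).
  by apply: eq_bigr => i _; rewrite xsE.
have dphi_z i : differentiable (phi i) z by rewrite -(xsE i).
have min_z w : \sum_(i < m) (phi i z + G z) <= \sum_(i < m) (phi i w + G w).
  have := hmin _ (kronI_unblk_const w).
  by rewrite sumE => /le_trans; apply; under eq_bigr do rewrite blk_unblk.
have [s s0 hs] := separable_min_multipliers m0 hG hphi dphi_z min_z.
have [S hS] := sum_eq0_dotc_kronI s0.
by exists S => x; rewrite sumE hS -big_split; exact: (hs (blk x)).
Qed.

End ConsensusConstraint.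

Theorem theorem1 (R : realType) (m dx dy : nat)
  (hm : (2 <= m)%N) (hdx : (1 <= dx)%N) (hdy : (1 <= dy)%N)
  (* undirected, connected, simple graph on [m] *)
  (E : rel 'I_m)
  (hEsym : symmetric E) (hEirr : irreflexive E)
  (hEconn : forall i j : 'I_m, connect E i j)
  (* mixing matrix W *)
  (W : 'M[R]_m)
  (hWsym : W^T = W)
  (hWstoch : forall i : 'I_m, \sum_(j < m) W i j = 1)
  (hWpos : forall i j : 'I_m, i != j -> (0 < W i j <-> E i j))
  (hWdiag : forall i : 'I_m, 0 < W i i)
  (hWeig : forall a : R, eigenvalue W a -> -1 < a <= 1)
  (hWeig1 : \rank (eigenspace W 1) = 1%N)
  (* U = the positive semidefinite square root of I - W *)
  (U : 'M[R]_m)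
  (hUsym : U^T = U)
  (hUpsd : forall v : 'rV[R]_m, 0 <= (v *m U *m v^T) 0 0)
  (hUsq : U *m U = 1%:M - W)
  (* local functions *)
  (f : 'I_m -> 'rV[R]_dx -> 'rV[R]_dy -> R) (g : 'rV[R]_dx -> R) (r : 'rV[R]_dy -> R)
  (mux muy : R) (hmux : 0 < mux) (hmuy : 0 < muy)
  (hfdiff : forall (i : 'I_m) (p : 'rV[R]_dx * 'rV[R]_dy),
     differentiable (fun q : 'rV[R]_dx * 'rV[R]_dy => f i q.1 q.2) p)
  (hfx : forall (i : 'I_m) (y : 'rV[R]_dy), strongly_convex mux (fun x => f i x y))
  (hfy : forall (i : 'I_m) (x : 'rV[R]_dx), strongly_concave muy (fun y => f i x y))
  (hg : convex_fun g) (hr : convex_fun r)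
  (xs : 'cV[R]_(m * dx)) (ys : 'cV[R]_(m * dy)) :
  saddleP U f g r xs ys <->
  exists (Sxs : 'cV[R]_(m * dx)) (Sys : 'cV[R]_(m * dy)),
    saddleL U f g r xs ys Sxs Sys.
Proof.
have m0 : (0 < m)%N by exact: ltnW.
have hkerU := kermx_sqrt_laplacian hWsym hWstoch hUsym hUsq hWeig1.
split.
- case=> Uxs0 Uys0 xs_min ys_max.
  have min_x x : kronI dx U *m x = 0 ->
      \sum_(i < m) (f i (blk xs i) (blk ys i) + g (blk xs i))
        <= \sum_(i < m) (f i (blk x i) (blk ys i) + g (blk x i)).
    by move=> /xs_min; rewrite /objP !big_split /=; lra.
  have min_y y : kronI dy U *m y = 0 ->
      \sum_(i < m) (- f i (blk xs i) (blk ys i) + r (blk ys i))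
        <= \sum_(i < m) (- f i (blk xs i) (blk y i) + r (blk y i)).
    by move=> /ys_max; rewrite /objP !big_split !sumrN /=; lra.
  have [Sx hSx] := consensus_multiplier hUsym hkerU m0 Uxs0 hg
    (fun i => strongly_convex_convex (ltW hmux) (hfx i _))
    (fun i => differentiable_slicel (hfdiff i (_, _))) min_x.
  have [Sy hSy] := consensus_multiplier hUsym hkerU m0 Uys0 hr
    (fun i => strongly_convex_convex (ltW hmuy) (hfy i _))
    (fun i => differentiableN (differentiable_slicer (hfdiff i (_, _)))) min_y.
  exists Sx, (- Sy); split=> [x ? | y ?].
  + by have := hSx x; rewrite /lagr Uxs0 Uys0 !dotc0r /objP !big_split /=; lra.
  + by have := hSy y; rewrite /lagr Uxs0 Uys0 !dotc0r dotcNl /objP !big_split !sumrN /=; lra.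
- case=> Sx [Sy [xs_min ys_max]].
  have Uys0 : kronI dy U *m ys = 0.
    by apply: (@dotc_min_eq0 _ _ Sy) => S; have := xs_min xs S; rewrite /lagr; lra.
  have Uxs0 : kronI dx U *m xs = 0.
    by apply: (@dotc_max_eq0 _ _ Sx) => S; have := ys_max ys S; rewrite /lagr; lra.
  split=> // [x Ux0 | y Uy0].
  + by have := xs_min x Sy; rewrite /lagr Ux0 Uxs0 Uys0 !dotc0r; lra.
  + by have := ys_max y Sx; rewrite /lagr Uy0 Uxs0 Uys0 !dotc0r; lra.
Qed.
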